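(* The lattice of subvarieties of $\mathbf{K}_2$ has cardinality $2^\omega$.
   Context: A pseudocomplemented de Morgan algebra is $(L;\wedge,\vee,{}^\ast,{}^\prime,0,1)$ with bounded distributive lattice reduct, pseudocomplement ${}^\ast$ and de Morgan involution ${}^\prime$. With $x^{0(\prime\ast)}=x$, $x^{(k+1)(\prime\ast)}=((x^{k(\prime\ast)})')^\ast$, $\mathbf{K}_2$ is the variety of such algebras satisfying $x\wedge x^{\prime\ast\prime}\le y\vee y^\ast$ (regularity), $x\wedge x'\le y\vee y'$ (Kleene), and $(x\wedge x^{\prime\ast})^{2(\prime\ast)}=(x\wedge x^{\prime\ast})^{3(\prime\ast)}$ (range $2$). *)

From Stdlib Require Import Arith.

Record alg := Alg {
  car :> Type;
  meet : car -> car -> car;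
  join : car -> car -> car;
  pstar : car -> car;
  dm : car -> car;
  zero : car;
  one : car
}.

Definition le (A : alg) (x y : car A) : Prop := meet A x y = x.

Definition is_bdl (A : alg) : Prop :=
  (forall x y, meet A x y = meet A y x) /\
  (forall x y, join A x y = join A y x) /\
  (forall x y z, meet A x (meet A y z) = meet A (meet A x y) z) /\
  (forall x y z, join A x (join A y z) = join A (join A x y) z) /\
  (forall x y, meet A x (join A x y) = x) /\
  (forall x y, join A x (meet A x y) = x) /\
  (forall x y z, meet A x (join A y z) = join A (meet A x y) (meet A x z)) /\
  (forall x, meet A x (zero A) = zero A) /\
  (forall x, join A x (one A) = one A).

Definition is_pcdma (A : alg) : Prop :=
  is_bdl A /\
  (forall x y, meet A y x = zero A <-> le A y (pstar A x)) /\
  (forall x, dm A (dm A x) = x) /\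
  (forall x y, dm A (meet A x y) = join A (dm A x) (dm A y)) /\
  (forall x y, dm A (join A x y) = meet A (dm A x) (dm A y)) /\
  dm A (zero A) = one A /\ dm A (one A) = zero A.

Definition ps (A : alg) (x : car A) : car A := pstar A (dm A x).

Definition in_K2 (A : alg) : Prop :=
  is_pcdma A /\
  (* regularity law *)
  (forall x y, le A (meet A x (dm A (ps A x))) (join A y (pstar A y))) /\
  (* Kleene *)
  (forall x y, le A (meet A x (dm A x)) (join A y (dm A y))) /\
  (* range 2 law *)
  (forall x, let u := meet A x (ps A x) in
     ps A (ps A u) = ps A (ps A (ps A u))).

Inductive term : Type :=
| tVar : nat -> term
| tMeet : term -> term -> term
| tJoin : term -> term -> term
| tStar : term -> term
| tDm : term -> term
| tZero : term
| tOne : term.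

Fixpoint eval (A : alg) (v : nat -> car A) (t : term) : car A :=
  match t with
  | tVar n => v n
  | tMeet s u => meet A (eval A v s) (eval A v u)
  | tJoin s u => join A (eval A v s) (eval A v u)
  | tStar s => pstar A (eval A v s)
  | tDm s => dm A (eval A v s)
  | tZero => zero A
  | tOne => one A
  end.

Definition identity := (term * term)%type.

Definition satisfies (A : alg) (e : identity) : Prop :=
  forall v : nat -> car A, eval A v (fst e) = eval A v (snd e).

Definition alg_class := alg -> Prop.

Definition same_class (V W : alg_class) : Prop := forall A, V A <-> W A.

Definition subvariety_K2 (V : alg_class) : Prop :=
  exists Sigma : identity -> Prop,
    forall A, V A <-> (in_K2 A /\ forall e, Sigma e -> satisfies A e).

(* "The set of subvarieties of K2 (up to equality of classes) has
   cardinality 2^omega": injection from Cantor space into it, and an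
   injection from it into Cantor space. *)
Definition subvarieties_K2_continuum : Prop :=
  (exists F : (nat -> bool) -> alg_class,
      (forall s, subvariety_K2 (F s)) /\
      (forall s t, same_class (F s) (F t) -> s = t)) /\
  (exists G : alg_class -> (nat -> bool),
      forall V W, subvariety_K2 V -> subvariety_K2 W ->
        G V = G W -> same_class V W).

(* A reflexive symmetric graph (W, E) gives a pseudocomplemented de Morgan
   algebra of pairs (A, B) of subsets of W with B inside the E-interior [box A]:
   ' is (A, B) |-> (W \ B, W \ A) and * is (A, B) |-> (W \ A, box (W \ A)).  It
   satisfies the regularity and Kleene laws, and the range 2 law as soon as
   every walk of length 3 can be shortened to one of length 2.  Reading x^** as
   an atom, * as negation and x |-> x'* as box, every modal formula phi becomes a
   term t(phi) evaluating to (|phi|, box |phi|), so t(phi) = 0 holds in the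
   algebra iff phi is satisfiable nowhere in the graph.

   For N >= 2 let C_N be K_2N minus a perfect matching (with loops).  The
   formula "everywhere exactly one of 2N labels holds and vertices carrying
   matched labels are not adjacent, and every label occurs" is satisfiable in
   C_M only for M = N, as it forces a labelling that is a bijection.  So the
   identities t(phi_N) = 0 are independent over K2, and for s : nat -> bool the
   identities t(phi_(n+2)) = 0 with s n = false axiomatise pairwise distinct
   subvarieties.  Conversely a subvariety is determined by its equational
   theory, a set of identities, and identities can be coded by naturals. *)

From Stdlib Require Import Classical ClassicalEpsilon FunctionalExtensionality
  PropExtensionality ProofIrrelevance Arith List Lia Bool.
From Stdlib Require Cantor.

Lemma pred_ext {T : Type} (P Q : T -> Prop) : (forall x, P x <-> Q x) -> P = Q.
Proof.
  intro h; apply functional_extensionality; intro x; apply propositional_extensionality, h.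
Qed.

Inductive mform : Type :=
| MVar (k : nat)
| MNot (f : mform)
| MAnd (f g : mform)
| MBox (f : mform)
| MTop.

Fixpoint mterm (f : mform) : term :=
  match f with
  | MVar k => tStar (tStar (tVar k))
  | MNot f => tStar (mterm f)
  | MAnd f g => tMeet (mterm f) (mterm g)
  | MBox f => tStar (tDm (mterm f))
  | MTop => tOne
  end.

Definition mimp (f g : mform) : mform := MNot (MAnd f (MNot g)).
Definition dia (f : mform) : mform := MNot (MBox (MNot f)).
Definition forall_in (l : list nat) (F : nat -> mform) : mform := fold_right MAnd MTop (map F l).
Definition exists_in (l : list nat) (F : nat -> mform) : mform :=
  MNot (forall_in l (fun k => MNot (F k))).

Section FrameAlgebra.

Variables (W : Type) (E : W -> W -> Prop).
Hypothesis E_refl : forall w, E w w.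
Hypothesis E_sym : forall v w, E v w -> E w v.

Definition box (S : W -> Prop) (v : W) : Prop := forall w, E v w -> S w.

Record spair := SPair {
  pA : W -> Prop;
  pB : W -> Prop;
  pB_box : forall v, pB v -> box pA v }.

Definition box_pair (S : W -> Prop) : spair := SPair S (box S) (fun v h => h).

Definition pair_meet (x y : spair) : spair :=
  SPair (fun v => pA x v /\ pA y v) (fun v => pB x v /\ pB y v)
    (fun v h w e => conj (pB_box x v (proj1 h) w e) (pB_box y v (proj2 h) w e)).

Definition pair_join (x y : spair) : spair :=
  SPair (fun v => pA x v \/ pA y v) (fun v => pB x v \/ pB y v)
    (fun v h w e => match h with
                    | or_introl hx => or_introl (pB_box x v hx w e)
                    | or_intror hy => or_intror (pB_box y v hy w e)
                    end).

Definition pair_star (x : spair) : spair := box_pair (fun v => ~ pA x v).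

Definition pair_dm (x : spair) : spair :=
  SPair (fun v => ~ pB x v) (fun v => ~ pA x v)
    (fun v h w e hw => h (pB_box x w hw v (E_sym v w e))).

Definition pair_zero : spair := SPair (fun _ => False) (fun _ => False) (fun v h => False_ind _ h).
Definition pair_one : spair := SPair (fun _ => True) (fun _ => True) (fun _ _ _ _ => I).

Definition frame_alg : alg := Alg spair pair_meet pair_join pair_star pair_dm pair_zero pair_one.

Lemma pair_ext (x y : spair) :
  (forall v, pA x v <-> pA y v) -> (forall v, pB x v <-> pB y v) -> x = y.
Proof.
  destruct x as [A B hAB], y as [A' B' hAB']; simpl; intros hA hB.
  apply pred_ext in hA, hB; subst A' B'.
  f_equal; apply proof_irrelevance.
Qed.

Lemma pA_congr {x y : spair} : x = y -> forall v, pA x v -> pA y v.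
Proof. now intros ->. Qed.

Lemma pB_pA (x : spair) v : pB x v -> pA x v.
Proof. intro h; exact (pB_box x v h v (E_refl v)). Qed.

(* By Glivenko's theorem [tauto] proves the double negation of every classical
   propositional tautology, which [NNPP] then discharges. *)
Ltac pair_tauto :=
  apply pair_ext; intro; simpl; split; intro; first [tauto | apply NNPP; tauto].

Lemma frame_bdl : is_bdl frame_alg.
Proof. repeat split; intros; pair_tauto. Qed.

Lemma frame_pseudocomplement (x y : spair) :
  pair_meet y x = pair_zero <-> le frame_alg y (pair_star x).
Proof.
  unfold le; split; intro h.
  - apply pair_ext; intro v; simpl; split; try tauto.
    + intros hy; split; [exact hy|]. intro hx. exact (pA_congr h v (conj hy hx)).
    + intros hy; split; [exact hy|]. intros w e hx.
      exact (pA_congr h w (conj (pB_box y v hy w e) hx)).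
  - apply pair_ext; intro v; simpl; split; try tauto.
    + intros [hy hx]. apply (pA_congr (eq_sym h) v hy); exact hx.
    + intros [hy hx]. apply (pA_congr (eq_sym h) v (pB_pA y v hy)); exact (pB_pA x v hx).
Qed.

Lemma frame_pcdma : is_pcdma frame_alg.
Proof.
  split; [exact frame_bdl|]. split; [exact frame_pseudocomplement|].
  repeat split; intros; pair_tauto.
Qed.

Lemma box_pair_not_not (S : W -> Prop) : box_pair (fun v => ~ ~ S v) = box_pair S.
Proof. f_equal; apply pred_ext; intro v; split; [apply NNPP | tauto]. Qed.

Lemma ps_frame (x : spair) : ps frame_alg x = box_pair (pB x).
Proof. apply box_pair_not_not. Qed.

Lemma frame_regular (x y : spair) :
  le frame_alg (pair_meet x (pair_dm (ps frame_alg x))) (pair_join y (pair_star y)).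
Proof. unfold le; rewrite ps_frame; pair_tauto. Qed.

Lemma frame_kleene (x y : spair) :
  le frame_alg (pair_meet x (pair_dm x)) (pair_join y (pair_dm y)).
Proof.
  unfold le; apply pair_ext; intro v; simpl; pose proof (pB_pA x v); pose proof (pB_pA y v);
    split; intro; first [tauto | apply NNPP; tauto].
Qed.

Fixpoint holds (R : nat -> W -> Prop) (f : mform) : W -> Prop :=
  match f with
  | MVar k => R k
  | MNot f => fun v => ~ holds R f v
  | MAnd f g => fun v => holds R f v /\ holds R g v
  | MBox f => box (holds R f)
  | MTop => fun _ => True
  end.

Lemma holds_mimp R f g v : holds R (mimp f g) v <-> (holds R f v -> holds R g v).
Proof. simpl; split; [intros h hf; apply NNPP | ]; tauto. Qed.

Lemma holds_dia R f v : holds R (dia f) v <-> exists w, E v w /\ holds R f w.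
Proof.
  simpl; unfold box; split.
  - intro h; apply NNPP; intro hno; apply h; intros w e hw; apply hno; now exists w.
  - intros [w [e hw]] h; exact (h w e hw).
Qed.

Lemma holds_forall_in R l F v :
  holds R (forall_in l F) v <-> forall k, In k l -> holds R (F k) v.
Proof.
  induction l as [|k l IH]; simpl.
  - split; [intros _ k [] | auto].
  - rewrite IH; split; [intros [hk hl] j [<- | hj]; auto | auto].
Qed.

Lemma holds_exists_in R l F v :
  holds R (exists_in l F) v <-> exists k, In k l /\ holds R (F k) v.
Proof.
  unfold exists_in; cbn [holds]; rewrite holds_forall_in; split.
  - intro h; apply NNPP; intro hno; apply h; intros k hk hF; apply hno; now exists k.
  - intros [k [hk hF]] h; exact (h k hk hF).
Qed.

Lemma meet_box_pair (S T : W -> Prop) :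
  pair_meet (box_pair S) (box_pair T) = box_pair (fun v => S v /\ T v).
Proof.
  apply pair_ext; intro v; simpl; unfold box; [tauto|].
  split; [intros [hS hT] w e; split; auto | intro h; split; intros w e; apply h, e].
Qed.

Lemma eval_mterm (val : nat -> spair) (f : mform) :
  eval frame_alg val (mterm f) = box_pair (holds (fun k => pA (val k)) f).
Proof.
  induction f as [k | f IH | f IHf g IHg | f IH |]; simpl.
  - apply box_pair_not_not.
  - rewrite IH; reflexivity.
  - rewrite IHf, IHg; apply meet_box_pair.
  - rewrite IH; apply box_pair_not_not.
  - apply pair_ext; intro v; simpl; unfold box; split; auto.
Qed.

Lemma satisfies_mterm_zero (f : mform) :
  satisfies frame_alg (mterm f, tZero) <-> forall R v, ~ holds R f v.
Proof.
  split.
  - intros hsat R v hv. specialize (hsat (fun k => box_pair (R k))); simpl in hsat.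
    rewrite eval_mterm in hsat; exact (pA_congr hsat v hv).
  - intros hnot val; simpl; rewrite eval_mterm.
    apply pair_ext; intro v; simpl; split; try tauto.
    + apply hnot.
    + intro h; exact (hnot _ v (h v (E_refl v))).
Qed.

Lemma box_and_box (S : W -> Prop) : box (fun v => S v /\ box S v) = box (box S).
Proof.
  apply pred_ext; intro v; unfold box; split.
  - intros h w e; apply h, e.
  - intros h w e; split; [apply (h w e w (E_refl w)) | apply h, e].
Qed.

Hypothesis E_shortcut :
  forall v a b c, E v a -> E a b -> E b c -> exists d, E v d /\ E d c.

Lemma box_box_box (S : W -> Prop) : box (box (box S)) = box (box S).
Proof.
  apply pred_ext; intro v; unfold box; split.
  - intros h a ea b eb. exact (h a ea b eb b (E_refl b)).
  - intros h a ea b eb c ec. destruct (E_shortcut v a b c ea eb ec) as [d [ed edc]].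
    exact (h d ed c edc).
Qed.

Lemma frame_range2 (x : spair) :
  let u := pair_meet x (ps frame_alg x) in
  ps frame_alg (ps frame_alg u) = ps frame_alg (ps frame_alg (ps frame_alg u)).
Proof.
  intro u; unfold u; rewrite !ps_frame; simpl; f_equal.
  rewrite box_and_box, box_box_box; reflexivity.
Qed.

Lemma frame_K2 : in_K2 frame_alg.
Proof.
  split; [exact frame_pcdma|]. split; [exact frame_regular|].
  split; [exact frame_kleene | exact frame_range2].
Qed.

End FrameAlgebra.

Arguments holds {W} E R f v.

Lemma injection_le a b (f : nat -> nat) :
  (forall x, x < a -> f x < b) ->
  (forall x y, x < a -> y < a -> f x = f y -> x = y) -> a <= b.
Proof.
  intros hf hinj.
  rewrite <- (length_seq a 0), <- (length_map f), <- (length_seq b 0).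
  apply NoDup_incl_length.
  - apply NoDup_map_NoDup_ForallPairs; [|apply seq_NoDup].
    intros x y hx hy; apply in_seq in hx, hy; apply hinj; lia.
  - intros y hy; apply in_map_iff in hy as [x [<- hx]]; apply in_seq in hx; apply in_seq.
    specialize (hf x); lia.
Qed.

Lemma relation_injection_le a b (Q : nat -> nat -> Prop) :
  (forall x, x < a -> exists y, y < b /\ Q x y) ->
  (forall x x' y, Q x y -> Q x' y -> x = x') -> a <= b.
Proof.
  intros htot hinj.
  set (f x := epsilon (inhabits 0) (fun y => y < b /\ Q x y)).
  assert (hf : forall x, x < a -> f x < b /\ Q x (f x)) by (intros x hx; exact (epsilon_spec _ _ (htot x hx))).
  apply (injection_le a b f); [apply hf|].
  intros x y hx hy e; apply (hinj x y (f x)); [apply hf, hx | rewrite e; apply hf, hy].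
Qed.

Lemma bijective_relation_eq a b (Q : nat -> nat -> Prop) :
  (forall x, x < a -> exists y, y < b /\ Q x y) ->
  (forall y, y < b -> exists x, x < a /\ Q x y) ->
  (forall x y y', Q x y -> Q x y' -> y = y') ->
  (forall x x' y, Q x y -> Q x' y -> x = x') -> a = b.
Proof.
  intros htot hsurj hfun hinj.
  pose proof (relation_injection_le a b Q htot hinj).
  pose proof (relation_injection_le b a (fun y x => Q x y) hsurj
                (fun y y' x hy hy' => hfun x y y' hy hy')).
  lia.
Qed.

Definition partner (k : nat) : nat := if Nat.even k then S k else pred k.

Lemma partner_even j : partner (2 * j) = 2 * j + 1.
Proof. unfold partner; rewrite Nat.even_mul; simpl; lia. Qed.

Lemma partner_odd j : partner (2 * j + 1) = 2 * j.
Proof. unfold partner; rewrite Nat.add_1_r, Nat.even_succ, Nat.odd_mul; simpl; lia. Qed.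

Lemma partner_involutive k : partner (partner k) = k.
Proof.
  destruct (Nat.Even_or_Odd k) as [[j ->] | [j ->]];
    [rewrite partner_even, partner_odd | rewrite partner_odd, partner_even]; reflexivity.
Qed.

Lemma partner_neq k : partner k <> k.
Proof.
  destruct (Nat.Even_or_Odd k) as [[j ->] | [j ->]];
    [rewrite partner_even | rewrite partner_odd]; lia.
Qed.

Lemma partner_lt k N : k < 2 * N -> partner k < 2 * N.
Proof.
  destruct (Nat.Even_or_Odd k) as [[j ->] | [j ->]];
    [rewrite partner_even | rewrite partner_odd]; lia.
Qed.

Definition labels (N : nat) : list nat := seq 0 (2 * N).

Lemma in_labels k N : In k (labels N) <-> k < 2 * N.
Proof. unfold labels; rewrite in_seq; lia. Qed.

Definition some_label (N : nat) : mform := exists_in (labels N) MVar.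

Definition unique_label (N : nat) : mform :=
  forall_in (labels N) (fun k =>
    forall_in (remove Nat.eq_dec k (labels N)) (fun l => mimp (MVar k) (MNot (MVar l)))).

Definition partner_apart (N : nat) : mform :=
  forall_in (labels N) (fun k => mimp (MVar k) (MBox (MNot (MVar (partner k))))).

Definition good_labelling (N : nat) : mform :=
  MAnd (some_label N) (MAnd (unique_label N) (partner_apart N)).

Definition size_formula (N : nat) : mform :=
  MAnd (MBox (MBox (good_labelling N))) (forall_in (labels N) (fun k => dia (dia (MVar k)))).

Section Labellings.

Variables (W : Type) (E : W -> W -> Prop) (R : nat -> W -> Prop) (N : nat).

Lemma holds_some_label v :
  holds E R (some_label N) v <-> exists k, k < 2 * N /\ R k v.
Proof.
  unfold some_label; rewrite holds_exists_in.
  split; intros [k [hk hr]]; exists k; rewrite in_labels in *; auto.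
Qed.

Lemma holds_unique_label v :
  holds E R (unique_label N) v <->
  forall k l, k < 2 * N -> l < 2 * N -> R k v -> R l v -> k = l.
Proof.
  unfold unique_label; rewrite holds_forall_in; split.
  - intros h k l hk hl hrk hrl; apply NNPP; intro hkl.
    apply in_labels in hk, hl.
    specialize (h k hk); rewrite holds_forall_in in h.
    exact (proj1 (holds_mimp _ _ _ _ _ _) (h l (in_in_remove _ _ (not_eq_sym hkl) hl)) hrk hrl).
  - intros h k hk; rewrite holds_forall_in; intros l hl; rewrite holds_mimp.
    apply in_remove in hl as [hl hlk]; apply in_labels in hk, hl.
    intros hrk hrl; exact (hlk (eq_sym (h k l hk hl hrk hrl))).
Qed.

Lemma holds_partner_apart v :
  holds E R (partner_apart N) v <->
  forall k, k < 2 * N -> R k v -> forall w, E v w -> ~ R (partner k) w.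
Proof.
  unfold partner_apart; rewrite holds_forall_in; split.
  - intros h k hk; apply in_labels in hk; specialize (h k hk).
    rewrite holds_mimp in h; exact h.
  - intros h k hk; rewrite holds_mimp; apply in_labels in hk; exact (h k hk).
Qed.

End Labellings.

Definition cocktail_point (N : nat) : Type := {k : nat | k < 2 * N}.

Definition cocktail_adj (N : nat) (x y : cocktail_point N) : Prop :=
  proj1_sig y <> partner (proj1_sig x).

Lemma cocktail_adj_refl N (x : cocktail_point N) : cocktail_adj N x x.
Proof. intro h; exact (partner_neq _ (eq_sym h)). Qed.

Lemma cocktail_adj_sym N (x y : cocktail_point N) : cocktail_adj N x y -> cocktail_adj N y x.
Proof. unfold cocktail_adj; intros h e; apply h; rewrite e, partner_involutive; reflexivity. Qed.

Lemma cocktail_two_step N (hN : 2 <= N) (x y : cocktail_point N) :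
  exists a, cocktail_adj N x a /\ cocktail_adj N a y.
Proof.
  set (p := partner (proj1_sig x)); set (q := partner (proj1_sig y)).
  assert (hc : exists c, c < 3 /\ c <> p /\ c <> q).
  { destruct (Nat.eq_dec p 0), (Nat.eq_dec q 0), (Nat.eq_dec p 1), (Nat.eq_dec q 1);
      first [exists 0; lia | exists 1; lia | exists 2; lia]. }
  destruct hc as [c [hc [hp hq]]].
  assert (hcN : c < 2 * N) by lia.
  exists (exist _ c hcN); unfold cocktail_adj; simpl; split; [exact hp|].
  intro h; apply hq; unfold q; rewrite <- (partner_involutive c); f_equal; exact (eq_sym h).
Qed.

Definition cocktail_alg (N : nat) : alg :=
  frame_alg (cocktail_point N) (cocktail_adj N) (cocktail_adj_sym N).

Lemma cocktail_K2 N : 2 <= N -> in_K2 (cocktail_alg N).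
Proof.
  intro hN; apply frame_K2; [apply cocktail_adj_refl|].
  intros v a b c _ _ _; apply cocktail_two_step, hN.
Qed.

Lemma cocktail_size_formula N (hN : 2 <= N) (x : cocktail_point N) :
  holds (cocktail_adj N) (fun k y => proj1_sig y = k) (size_formula N) x.
Proof.
  split.
  - intros a _ y _; split; [|split].
    + apply holds_some_label; exists (proj1_sig y); split; [exact (proj2_sig y) | reflexivity].
    + apply holds_unique_label; intros k l _ _ hk hl; congruence.
    + apply holds_partner_apart; intros k _ hk w hw e; apply hw; rewrite e, hk; reflexivity.
  - apply holds_forall_in; intros k hk; apply in_labels in hk.
    destruct (cocktail_two_step N hN x (exist _ k hk)) as [a [hxa hay]].
    apply holds_dia; exists a; split; [exact hxa|].
    apply holds_dia; exists (exist _ k hk); split; [exact hay | reflexivity].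
Qed.

Lemma cocktail_label_partner M N R (y w : cocktail_point M) k :
  holds (cocktail_adj M) R (good_labelling N) y -> k < 2 * N -> R k y -> R (partner k) w ->
  proj1_sig w = partner (proj1_sig y).
Proof.
  intros [_ [_ hy]] hk hr hw; apply NNPP; intro hne.
  exact (proj1 (holds_partner_apart _ _ _ _ _) hy k hk hr w hne hw).
Qed.

Lemma cocktail_size_formula_size M N (hM : 2 <= M) R (x : cocktail_point M) :
  holds (cocktail_adj M) R (size_formula N) x -> M = N.
Proof.
  intros [hbox hreal].
  assert (hgood : forall y, holds (cocktail_adj M) R (good_labelling N) y).
  { intro y; destruct (cocktail_two_step M hM x y) as [a [hxa hay]]; exact (hbox a hxa y hay). }
  assert (hrealized : forall k, k < 2 * N -> exists w, R k w).
  { intros k hk; apply in_labels in hk; rewrite holds_forall_in in hreal.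
    specialize (hreal k hk); apply holds_dia in hreal as [a [_ ha]].
    apply holds_dia in ha as [w [_ hw]]; now exists w. }
  set (Q i k := k < 2 * N /\ exists hi : i < 2 * M, R k (exist _ i hi)).
  enough (2 * M = 2 * N) by lia.
  apply (bijective_relation_eq _ _ Q).
  - intros i hi; destruct (hgood (exist _ i hi)) as [hsome _].
    apply holds_some_label in hsome as [k [hk hr]]; exists k; repeat split; eauto.
  - intros k hk; destruct (hrealized k hk) as [[i hi] hr]; exists i; repeat split; eauto.
  - intros i k l [hk [hi hrk]] [hl [hi' hrl]]; rewrite (proof_irrelevance _ hi' hi) in hrl.
    destruct (hgood (exist _ i hi)) as [_ [hunique _]].
    exact (proj1 (holds_unique_label _ _ _ _ _) hunique k l hk hl hrk hrl).
  - intros i i' k [hk [hi hr]] [_ [hi' hr']].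
    destruct (hrealized (partner k) (partner_lt k N hk)) as [w hw].
    pose proof (cocktail_label_partner _ _ _ _ _ _ (hgood _) hk hr hw) as e.
    pose proof (cocktail_label_partner _ _ _ _ _ _ (hgood _) hk hr' hw) as e'.
    simpl in e, e'; rewrite <- (partner_involutive i), <- (partner_involutive i'); congruence.
Qed.

Definition size_identity (N : nat) : identity := (mterm (size_formula N), tZero).

Lemma cocktail_satisfies_size_identity M N :
  2 <= M -> M <> N -> satisfies (cocktail_alg M) (size_identity N).
Proof.
  intros hM hMN; apply satisfies_mterm_zero; [apply cocktail_adj_refl|].
  intros R x hx; exact (hMN (cocktail_size_formula_size M N hM R x hx)).
Qed.

Lemma cocktail_refutes_size_identity N :
  2 <= N -> ~ satisfies (cocktail_alg N) (size_identity N).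
Proof.
  intros hN hsat; assert (h0 : 0 < 2 * N) by lia.
  refine (proj1 (satisfies_mterm_zero _ _ (cocktail_adj_refl N) _ _) hsat
            _ (exist _ 0 h0) (cocktail_size_formula N hN _)).
Qed.

Definition K2_models (Sigma : identity -> Prop) : alg_class :=
  fun A => in_K2 A /\ forall e, Sigma e -> satisfies A e.

Definition family_axioms (s : nat -> bool) (e : identity) : Prop :=
  exists n, s n = false /\ e = size_identity (n + 2).

Definition family (s : nat -> bool) : alg_class := K2_models (family_axioms s).

Lemma family_subvariety s : subvariety_K2 (family s).
Proof. exists (family_axioms s); intro A; reflexivity. Qed.

Lemma cocktail_in_family s n : family s (cocktail_alg (n + 2)) <-> s n = true.
Proof.
  split.
  - intros [_ hsat]; apply not_false_iff_true; intro hn.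
    apply (cocktail_refutes_size_identity (n + 2)); [lia|].
    apply hsat; now exists n.
  - intro hn; split; [apply cocktail_K2; lia|].
    intros e [m [hm ->]]; apply cocktail_satisfies_size_identity; [lia|].
    intro e; assert (m = n) as -> by lia; congruence.
Qed.

Lemma family_injective s t : same_class (family s) (family t) -> s = t.
Proof.
  intro h; apply functional_extensionality; intro n; apply eq_true_iff_eq.
  rewrite <- !cocktail_in_family; apply h.
Qed.

Fixpoint term_code (t : term) : nat :=
  match t with
  | tVar n => Cantor.to_nat (0, n)
  | tMeet a b => Cantor.to_nat (1, Cantor.to_nat (term_code a, term_code b))
  | tJoin a b => Cantor.to_nat (2, Cantor.to_nat (term_code a, term_code b))
  | tStar a => Cantor.to_nat (3, term_code a)
  | tDm a => Cantor.to_nat (4, term_code a)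
  | tZero => Cantor.to_nat (5, 0)
  | tOne => Cantor.to_nat (6, 0)
  end.

Lemma to_nat_pair_inj a b c d : Cantor.to_nat (a, b) = Cantor.to_nat (c, d) -> a = c /\ b = d.
Proof. intro h; apply Cantor.to_nat_inj in h; now injection h. Qed.

Lemma term_code_inj s t : term_code s = term_code t -> s = t.
Proof.
  revert t; induction s; destruct t; cbn [term_code]; intro e;
    apply to_nat_pair_inj in e as [etag e]; try discriminate etag;
    try apply to_nat_pair_inj in e as [e1 e2]; f_equal; auto.
Qed.

Definition identity_code (e : identity) : nat :=
  Cantor.to_nat (term_code (fst e), term_code (snd e)).

Lemma identity_code_inj e e' : identity_code e = identity_code e' -> e = e'.
Proof.
  destruct e as [s t], e' as [s' t']; unfold identity_code; simpl; intro h.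
  apply to_nat_pair_inj in h as [hs ht].
  f_equal; apply term_code_inj; assumption.
Qed.

Definition theory (V : alg_class) (e : identity) : Prop := forall A, V A -> satisfies A e.

Lemma subvariety_K2_theory V : subvariety_K2 V -> same_class V (K2_models (theory V)).
Proof.
  intros [Sigma hV] A; split.
  - intro hA; split; [exact (proj1 (proj1 (hV A) hA))|]. intros e he; exact (he A hA).
  - intros [hK hth]; apply hV; split; [exact hK|].
    intros e he; apply hth; intros B hB; exact (proj2 (proj1 (hV B) hB) e he).
Qed.

Lemma subvariety_K2_eq_theory V W :
  subvariety_K2 V -> subvariety_K2 W -> (forall e, theory V e <-> theory W e) ->
  same_class V W.
Proof.
  intros hV hW hth A; rewrite (subvariety_K2_theory V hV A), (subvariety_K2_theory W hW A).
  unfold K2_models; split; intros [hK hsat]; split; auto; intros e he; apply hsat, hth, he.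
Qed.

Definition theory_bits (V : alg_class) (n : nat) : bool :=
  if excluded_middle_informative (exists e, identity_code e = n /\ theory V e)
  then true else false.

Lemma theory_bits_spec V e : theory_bits V (identity_code e) = true <-> theory V e.
Proof.
  unfold theory_bits.
  destruct (excluded_middle_informative _) as [[e' [he' hth]] | hno]; split; intro h.
  - apply identity_code_inj in he'; subst; exact hth.
  - reflexivity.
  - discriminate.
  - exfalso; apply hno; now exists e.
Qed.

Theorem theorem6p5 : subvarieties_K2_continuum.
Proof.
  split.
  - exists family; split; [exact family_subvariety | exact family_injective].
  - exists theory_bits; intros V W hV hW hbits.
    apply subvariety_K2_eq_theory; [exact hV | exact hW |].
    intro e; rewrite <- !theory_bits_spec, hbits; reflexivity.
Qed.
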